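(* Let $\mathcal{D}$ be any distribution over pairs $(x,y)$ with $x\in\mathcal{X}\subseteq\mathbb{R}^d$ and $y\in\{1,\dots,k\}$, and let $h:\mathcal{X}\to\{-1,1\}$ be any hypothesis. Let $\pi_i=P(y=i)$ and $\beta=P(h(x)>0)$, and let \[ J(h)=2\sum_{i=1}^k \pi_i\,\bigl|P(h(x)>0)-P(h(x)>0\mid i)\bigr|. \] Then \[ \beta\in\Bigl[\tfrac12\bigl(1-\sqrt{1-J(h)}\bigr),\ \tfrac12\bigl(1+\sqrt{1-J(h)}\bigr)\Bigr]. \]
   Context: $P(h(x)>0\mid i)$ denotes the probability that $h(x)>0$ conditional on the label being $i$. It is known that $J(h)\in[0,1]$. *)

From HB Require Import structures.
From mathcomp Require Import all_boot all_order all_algebra.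
From mathcomp Require Import all_classical all_reals all_analysis.
Set Implicit Arguments. Unset Strict Implicit. Unset Printing Implicit Defensive.
Import Order.TTheory GRing.Theory Num.Theory.
Local Open Scope classical_set_scope.
Local Open Scope ring_scope.

Definition prb (R : realType) (dT : measure_display) (Omega : measurableType dT)
  (P : probability Omega R) (A : set Omega) : R := fine (P A).

(* Elementary conditional probability P(A | B) = P(A ∩ B) / P(B)
   (equals 0 when P(B) = 0, by MathComp's convention 0^-1 = 0). *)
Definition cprb (R : realType) (dT : measure_display) (Omega : measurableType dT)
  (P : probability Omega R) (A B : set Omega) : R :=
  prb P (A `&` B) / prb P B.

Definition Jh (R : realType) (dT : measure_display) (Omega : measurableType dT)
  (P : probability Omega R) (d k : nat) (x : Omega -> 'rV[R]_d) (y : Omega -> 'I_k)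
  (h : 'rV[R]_d -> R) : R :=
  let A := [set w | 0 < h (x w)] in
  2 * \sum_(i < k) prb P [set w | y w = i] *
        `| prb P A - cprb P A [set w | y w = i] |.

From HB Require Import structures.
From mathcomp Require Import all_boot all_order all_algebra.
From mathcomp Require Import all_classical all_reals all_analysis.
From mathcomp Require Import ring lra.
Import Order.TTheory GRing.Theory Num.Theory.
Local Open Scope classical_set_scope.
Local Open Scope ring_scope.

(* Write p_i = P(y = i) and a_i = P(h(x) > 0, y = i), so that beta = sum_i a_i
   and J/2 = sum_i |p_i beta - a_i|.  Splitting p_i beta - a_i as
   (p_i - a_i) beta - a_i (1 - beta), a difference of two nonnegative terms,
   gives J/2 <= 2 beta (1 - beta), i.e. (1 - 2 beta)^2 <= 1 - J, which is the
   claimed interval. *)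

Lemma sum_norm_scaled_gap_le {R : realFieldType} {k : nat} {p a : 'I_k -> R}
    {beta : R} :
  (forall i, 0 <= a i <= p i) -> \sum_i a i = beta -> \sum_i p i = 1 ->
  \sum_i `|p i * beta - a i| <= 2 * beta * (1 - beta).
Proof.
move=> hap ha hp.
have beta_ge0 : 0 <= beta.
  by rewrite -ha; apply: sumr_ge0 => i _; case/andP: (hap i).
have beta_le1 : beta <= 1.
  by rewrite -ha -hp; apply: ler_sum => i _; case/andP: (hap i).
apply: (@le_trans _ _ (\sum_i ((p i - a i) * beta + a i * (1 - beta)))).
  apply: ler_sum => i _; case/andP: (hap i) => a_ge0 a_le_p.
  have -> : p i * beta - a i = (p i - a i) * beta - a i * (1 - beta) by ring.
  apply: (le_trans (ler_normB _ _)).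
  by rewrite !ger0_norm //; apply: mulr_ge0; lra.
rewrite big_split /= -!mulr_suml sumrB ha hp; lra.
Qed.

Lemma interval_of_quadratic_bound (R : rcfType) (beta J : R) :
  J <= 4 * beta * (1 - beta) ->
  (1 - Num.sqrt (1 - J)) / 2 <= beta <= (1 + Num.sqrt (1 - J)) / 2.
Proof.
move=> hJ.
have : `|1 - 2 * beta| <= Num.sqrt (1 - J).
  have := sqr_ge0 (1 - 2 * beta).
  by rewrite -sqrtr_sqr => ?; rewrite ler_sqrt; nra.
by rewrite ler_norml => /andP[? ?]; apply/andP; split; lra.
Qed.

Section FinitePartition.
Context {R : realType} {dT : measure_display} {Omega : measurableType dT}.
Variable P : probability Omega R.
Implicit Types E F : set Omega.

Lemma prb_ge0 E : 0 <= prb P E.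
Proof. exact/fine_ge0/measure_ge0. Qed.

Lemma le_prb {E F} : measurable E -> measurable F ->
  E `<=` F -> prb P E <= prb P F.
Proof.
move=> mE mF EF.
by apply: fine_le; rewrite ?fin_num_measure //; apply: le_measure; rewrite ?inE.
Qed.

Lemma prb_mul_cprb (A B : set Omega) : measurable A -> measurable B ->
  prb P B * cprb P A B = prb P (A `&` B).
Proof.
move=> mA mB; rewrite /cprb.
have [B0|Bn0] := eqVneq (prb P B) 0; last by rewrite mulrCA divff ?mulr1.
have := le_prb (measurableI _ _ mA mB) mB (@subIsetr _ A B).
have := prb_ge0 (A `&` B); rewrite B0 mul0r; lra.
Qed.

Context {k : nat} {y : Omega -> 'I_k}.
Hypothesis my : forall i, measurable [set w | y w = i].

Lemma prb_partition {E} : measurable E ->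
  prb P E = \sum_i prb P (E `&` [set w | y w = i]).
Proof.
move=> mE.
have mEy i : measurable (E `&` [set w | y w = i]) by exact: measurableI.
have cover : \big[setU/set0]_(i < k) (E `&` [set w | y w = i]) = E.
  apply/seteqP; split => [w|w Ew].
    by elim/big_ind: _ => // [S T hS hT [/hS|/hT]|i _ []].
  by rewrite (bigD1 (y w)) //=; left.
have additive : P E = \sum_i P (E `&` [set w | y w = i]).
  rewrite -{1}cover measure_semi_additive_ord //; last by rewrite cover.
  by move=> i j _ _ [w [[_ <-] [_ <-]]].
rewrite /prb additive.
under eq_bigr => i _ do rewrite -(fineK (fin_num_measure P _ (mEy i))).
by rewrite sumEFin.
Qed.

Lemma sum_prb_partition : \sum_i prb P [set w | y w = i] = 1.
Proof.
under eq_bigr => i _ do rewrite -(setTI [set w | y w = i]).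
by rewrite -prb_partition // /prb probability_setT.
Qed.

End FinitePartition.

Theorem lemma2 (R : realType) (dT : measure_display) (Omega : measurableType dT)
  (P : probability Omega R) (d k : nat) (X : set 'rV[R]_d)
  (x : Omega -> 'rV[R]_d) (y : Omega -> 'I_k) (h : 'rV[R]_d -> R)
  (hxX : forall w, X (x w))
  (hpm1 : forall v, X v -> h v = 1 \/ h v = -1)
  (mA : measurable [set w | 0 < h (x w)])
  (my : forall i : 'I_k, measurable [set w | y w = i]) :
  let beta := prb P [set w | 0 < h (x w)] in
  let J := Jh P x y h in
  (1 - Num.sqrt (1 - J)) / 2 <= beta <= (1 + Num.sqrt (1 - J)) / 2.
Proof.
cbv zeta; set A := [set w | 0 < h (x w)].
set beta := prb P A; set J := Jh P x y h.
apply: interval_of_quadratic_bound.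
pose p i := prb P [set w | y w = i].
pose a i := prb P (A `&` [set w | y w = i]).
have hap i : 0 <= a i <= p i.
  rewrite prb_ge0 /=.
  by apply: le_prb; [exact: measurableI | exact: my | exact: subIsetr].
have J_eq : J = 2 * \sum_i `|p i * beta - a i|.
  rewrite /J /Jh; congr (_ * _); apply: eq_bigr => i _.
  rewrite -[X in X * _](ger0_norm (prb_ge0 P _)) -normrM mulrBr.
  by rewrite prb_mul_cprb.
have sum_a : \sum_i a i = beta by rewrite /beta (prb_partition P my mA).
have := sum_norm_scaled_gap_le hap sum_a (sum_prb_partition P my).
rewrite J_eq; lra.
Qed.
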